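(* Let $\mathcal C$ be a $G$-category (the action need not be free). Then there is a weakly $G$-equivariant equivalence $\mathcal C\to(\mathcal C/G)\#G$, where $(\mathcal C/G)\#G$ carries the free $G$-action $\mu\cdot x^{(\alpha)}=x^{(\mu\alpha)}$, $\mu\cdot f=f$.
   Context: $\Bbbk$ is a commutative ring; all categories are $\Bbbk$-linear; $G$ is a group; a $G$-category is a category with a group homomorphism $G\to\operatorname{Aut}$, $\alpha\mapsto A_\alpha$, written $\alpha x,\alpha f$. A weakly $G$-equivariant functor is a pair $(F,\rho)$, $F$ a functor between $G$-categories and $\rho_\alpha\colon A_\alpha F\to FA_\alpha$ natural isomorphisms with $(\rho_\beta A_\alpha)(A_\beta\rho_\alpha)=\rho_{\beta\alpha}$. Orbit category $\mathcal C/G$: objects of $\mathcal C$; morphisms $x\to y$ are row- and column-finite families $(f_{\beta,\alpha})_{(\alpha,\beta)\in G\times G}$, $f_{\beta,\alpha}\in\mathcal C(\alpha x,\beta y)$, with $f_{\gamma\beta,\gamma\alpha}=\gamma(f_{\beta,\alpha})$; composition $(gf)_{\beta,\alpha}=\sum_\gamma g_{\beta,\gamma}f_{\gamma,\alpha}$. It is $G$-graded by $(\mathcal C/G)^\alpha(x,y):=P^{(1)}_{x,y}(\mathcal C(\alpha x,y))$ where $P^{(1)}_{x,y}\colon\bigoplus_\alpha\mathcal C(\alpha x,y)\to(\mathcal C/G)(x,y)$, $(f_\alpha)\mapsto(\mu(f_{\mu^{-1}\lambda}))_{(\lambda,\mu)}$, is bijective. For a $G$-graded category $\mathcal B$ (decompositions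 $\mathcal B(x,y)=\bigoplus_\alpha\mathcal B^\alpha(x,y)$ with $\mathcal B^\beta\cdot\mathcal B^\alpha\subseteq\mathcal B^{\beta\alpha}$), the smash product $\mathcal B\#G$ has objects $x^{(\alpha)}$ ($x\in\mathcal B$, $\alpha\in G$), $(\mathcal B\#G)(x^{(\alpha)},y^{(\beta)})=\mathcal B^{\beta^{-1}\alpha}(x,y)$, composition from $\mathcal B$. *)

From HB Require Import structures.
From mathcomp Require Import all_boot all_algebra.
From Stdlib Require Import ClassicalEpsilon FunctionalExtensionality.
From Stdlib Require List.
Set Implicit Arguments. Unset Strict Implicit. Unset Printing Implicit Defensive.
Import GRing.Theory.
Local Open Scope ring_scope.

Record Grp := {
  gcar :> Type;
  gmul : gcar -> gcar -> gcar;
  gone : gcar;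
  ginv : gcar -> gcar;
  gmulA : forall a b c, gmul a (gmul b c) = gmul (gmul a b) c;
  gmul1g : forall a, gmul gone a = a;
  gmulg1 : forall a, gmul a gone = a;
  gmulVg : forall a, gmul (ginv a) a = gone;
  gmulgV : forall a, gmul a (ginv a) = gone }.
Arguments gmul {g} : rename.
Arguments gone {g} : rename.
Arguments ginv {g} : rename.

Record kcat (k : comPzRingType) := {
  Obj : Type;
  Hom : Obj -> Obj -> Type;
  hzero : forall x y, Hom x y;
  hadd : forall x y, Hom x y -> Hom x y -> Hom x y;
  hscale : forall x y, k -> Hom x y -> Hom x y;
  comp : forall x y z, Hom y z -> Hom x y -> Hom x z;
  idm : forall x, Hom x x }.
Arguments Obj {k} c : rename.
Arguments Hom {k} c : rename.
Arguments hzero {k c x y} : rename.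
Arguments hadd {k c x y} : rename.
Arguments hscale {k c x y} : rename.
Arguments comp {k c x y z} : rename.
Arguments idm {k c} x : rename.

Record is_kcat (k : comPzRingType) (C : kcat k) : Prop := {
  kc_addA : forall x y (f g h : Hom C x y), hadd f (hadd g h) = hadd (hadd f g) h;
  kc_addC : forall x y (f g : Hom C x y), hadd f g = hadd g f;
  kc_add0 : forall x y (f : Hom C x y), hadd hzero f = f;
  kc_scale1 : forall x y (f : Hom C x y), hscale 1 f = f;
  kc_scaleA : forall x y (a b : k) (f : Hom C x y), hscale a (hscale b f) = hscale (a * b) f;
  kc_scaleDl : forall x y (a b : k) (f : Hom C x y),
      hscale (a + b) f = hadd (hscale a f) (hscale b f);
  kc_scaleDr : forall x y (a : k) (f g : Hom C x y),
      hscale a (hadd f g) = hadd (hscale a f) (hscale a g);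
  kc_scale0 : forall x y (f : Hom C x y), hscale 0 f = hzero;
  kc_compA : forall x y z w (h : Hom C z w) (g : Hom C y z) (f : Hom C x y),
      comp h (comp g f) = comp (comp h g) f;
  kc_comp1l : forall x y (f : Hom C x y), comp (idm y) f = f;
  kc_comp1r : forall x y (f : Hom C x y), comp f (idm x) = f;
  kc_compDl : forall x y z (g1 g2 : Hom C y z) (f : Hom C x y),
      comp (hadd g1 g2) f = hadd (comp g1 f) (comp g2 f);
  kc_compDr : forall x y z (g : Hom C y z) (f1 f2 : Hom C x y),
      comp g (hadd f1 f2) = hadd (comp g f1) (comp g f2);
  kc_compZl : forall x y z (a : k) (g : Hom C y z) (f : Hom C x y),
      comp (hscale a g) f = hscale a (comp g f);
  kc_compZr : forall x y z (a : k) (g : Hom C y z) (f : Hom C x y),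
      comp g (hscale a f) = hscale a (comp g f) }.

Definition tr (k : comPzRingType) (C : kcat k) (x x' y y' : Obj C)
    (e1 : x = x') (e2 : y = y') (f : Hom C x y) : Hom C x' y' :=
  match e1 in _ = a return Hom C a y' with
  | erefl => match e2 in _ = b return Hom C x b with erefl => f end end.

Definition is_iso (k : comPzRingType) (C : kcat k) (x y : Obj C) (f : Hom C x y) : Prop :=
  exists g : Hom C y x, comp g f = idm x /\ comp f g = idm y.

(* G-categories: a group homomorphism G -> Aut(C), alpha |-> A_alpha.   *)
Record gcat (k : comPzRingType) (G : Grp) := {
  gbase :> kcat k;
  aobj : G -> Obj gbase -> Obj gbase;
  amor : forall (g : G) (x y : Obj gbase), Hom gbase x y -> Hom gbase (aobj g x) (aobj g y) }.
Arguments aobj {k G c} : rename.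
Arguments amor {k G c} g {x y} : rename.

Record is_gcat (k : comPzRingType) (G : Grp) (C : gcat k G) : Prop := {
  gc_kcat : is_kcat C;
  gc_amor_comp : forall g x y z (f : Hom C y z) (h : Hom C x y),
      amor g (comp f h) = comp (amor g f) (amor g h);
  gc_amor_id : forall g x, amor g (idm x) = idm (aobj (c:=C) g x);
  gc_amor_add : forall g x y (f h : Hom C x y), amor g (hadd f h) = hadd (amor g f) (amor g h);
  gc_amor_scale : forall g x y (a : k) (f : Hom C x y), amor g (hscale a f) = hscale a (amor g f);
  gc_aobj1 : forall x, aobj (c:=C) (gone : G) x = x;
  gc_amor1 : forall x y (f : Hom C x y) (ex : aobj (c:=C) (gone : G) x = x) (ey : aobj (c:=C) (gone : G) y = y),
      tr ex ey (amor (gone : G) f) = f;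
  gc_aobjM : forall (b a : G) x, aobj (c:=C) (gmul b a) x = aobj b (aobj a x);
  gc_amorM : forall (b a : G) x y (f : Hom C x y)
      (ex : aobj (c:=C) (gmul b a) x = aobj b (aobj a x)) (ey : aobj (c:=C) (gmul b a) y = aobj b (aobj a y)),
      tr ex ey (amor (gmul b a) f) = amor b (amor a f) }.

Record kfun (k : comPzRingType) (C D : kcat k) := {
  fobj : Obj C -> Obj D;
  fmor : forall x y, Hom C x y -> Hom D (fobj x) (fobj y) }.
Arguments fobj {k C D} f : rename.
Arguments fmor {k C D} f {x y} : rename.

Definition is_kfun (k : comPzRingType) (C D : kcat k) (F : kfun C D) : Prop :=
  (forall x y z (g : Hom C y z) (f : Hom C x y), fmor F (comp g f) = comp (fmor F g) (fmor F f)) /\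
  (forall x, fmor F (idm x) = idm (fobj F x)) /\
  (forall x y (f g : Hom C x y), fmor F (hadd f g) = hadd (fmor F f) (fmor F g)) /\
  (forall x y (a : k) (f : Hom C x y), fmor F (hscale a f) = hscale a (fmor F f)).

Record wefun (k : comPzRingType) (G : Grp) (C D : gcat k G) := {
  wfun :> kfun C D;
  rho : forall (g : G) (x : Obj C), Hom D (aobj g (fobj wfun x)) (fobj wfun (aobj g x)) }.
Arguments rho {k G C D} w g x : rename.

Definition is_wefun (k : comPzRingType) (G : Grp) (C D : gcat k G) (F : wefun C D) : Prop :=
  is_kfun F /\
  (forall g x y (f : Hom C x y),
      comp (rho F g y) (amor g (fmor F f)) = comp (fmor F (amor g f)) (rho F g x)) /\
  (forall g x, is_iso (rho F g x)) /\
  (forall (b a : G) x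
      (e1 : aobj (gmul b a) (fobj F x) = aobj b (aobj a (fobj F x)))
      (e2 : fobj F (aobj (gmul b a) x) = fobj F (aobj b (aobj a x))),
      comp (rho F b (aobj a x)) (amor b (rho F a x)) = tr e1 e2 (rho F (gmul b a) x)).

Definition is_equivalence (k : comPzRingType) (C D : kcat k) (F : kfun C D) : Prop :=
  (forall x y, bijective (@fmor _ _ _ F x y)) /\
  (forall d : Obj D, exists x : Obj C, exists f : Hom D (fobj F x) d, is_iso f).

Section Orbit.
Local Unset Implicit Arguments.
Variables (k : comPzRingType) (G : Grp) (C : gcat k G) (hC : is_gcat C).

(* families (f_{b,a})_{(a,b)}, f_{b,a} in C(a x, b y); written f b a *)
Definition ofam (x y : Obj C) := forall b a : G, Hom C (aobj a x) (aobj b y).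

(* sum over G of a family with finite support (all other terms are 0) *)
Definition fsum (a b : Obj C) (F : G -> Hom C a b) : Hom C a b :=
  epsilon (inhabits hzero) (fun m => exists s : seq G,
     List.NoDup s /\ (forall g, F g <> hzero -> List.In g s) /\
     m = foldr (fun g acc => hadd (F g) acc) hzero s).

Definition oequiv (x y : Obj C) (f : ofam x y) : Prop :=
  forall (c b a : G) (ex : aobj (gmul c a) x = aobj c (aobj a x))
         (ey : aobj (gmul c b) y = aobj c (aobj b y)),
    tr ex ey (f (gmul c b) (gmul c a)) = amor c (f b a).

Definition is_omor (x y : Obj C) (f : ofam x y) : Prop :=
  oequiv x y f /\
  (forall a, exists s : seq G, forall b, f b a <> hzero -> List.In b s) /\
  (forall b, exists s : seq G, forall a, f b a <> hzero -> List.In a s).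

Definition ocomp (x y z : Obj C) (g : ofam y z) (f : ofam x y) : ofam x z :=
  fun b a => fsum _ _ (fun c => comp (g b c) (f c a)).

Definition oid (x : Obj C) : ofam x x := fun b a =>
  match excluded_middle_informative (a = b) with
  | left e => match e in _ = b' return Hom C (aobj a x) (aobj b' x) with erefl => idm _ end
  | right _ => hzero end.

Definition ozero (x y : Obj C) : ofam x y := fun b a => hzero.

Lemma deg_obj (x : Obj C) (m l a : G) :
  gmul (ginv m) l = a -> aobj l x = aobj m (aobj a x).
Proof.
move=> e; rewrite -(gc_aobjM hC) -e gmulA gmulgV gmul1g //.
Qed.

(* P^(1)_{x,y} restricted to the summand C(a x, y):
   (P h)_{(l,m)} = m(h) if m^{-1} l = a, and 0 otherwise *)
Definition P1 (x y : Obj C) (a : G) (h : Hom C (aobj a x) y) : ofam x y :=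
  fun m l => match excluded_middle_informative (gmul (ginv m) l = a) with
  | left e => tr (esym (deg_obj x m l a e)) erefl (amor m h)
  | right _ => hzero end.

Definition in_deg (x y : Obj C) (a : G) (f : ofam x y) : Prop :=
  exists h : Hom C (aobj a x) y, f = P1 x y a h.

Definition SObj := (Obj C * G)%type.

Definition svalid (p q : SObj) (f : ofam p.1 q.1) : Prop :=
  is_omor p.1 q.1 f /\ in_deg p.1 q.1 (gmul (ginv q.2) p.2) f.

Definition SHom (p q : SObj) := {f : ofam p.1 q.1 | svalid p q f}.

Lemma tr_zero (x x' y y' : Obj C) (e1 : x = x') (e2 : y = y') :
  tr e1 e2 (hzero : Hom C x y) = hzero.
Proof. by destruct e1; destruct e2. Qed.

Lemma amor_zero g (x y : Obj C) : amor g (hzero : Hom C x y) = hzero.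
Proof.
have hK := gc_kcat hC.
by rewrite -(kc_scale0 hK hzero) (gc_amor_scale hC) (kc_scale0 hK).
Qed.

Lemma ozero_valid (p q : SObj) : svalid p q (ozero p.1 q.1).
Proof.
split; [split; [|split]|].
- by move=> c b a ex ey; rewrite /ozero tr_zero amor_zero.
- by move=> a; exists [::] => b; rewrite /ozero.
- by move=> b; exists [::] => a; rewrite /ozero.
- exists hzero; apply: functional_extensionality_dep => m.
  apply: functional_extensionality_dep => l.
  rewrite /P1 /ozero; case: excluded_middle_informative => // e.
  by rewrite amor_zero tr_zero.
Qed.

(* the C/G-operation, as an element of the hom-space of (C/G)#G
   (the result always lies in it; the fallback branch is never used) *)
Definition mkS (p q : SObj) (f : ofam p.1 q.1) : SHom p q :=
  match excluded_middle_informative (svalid p q f) with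
  | left H => exist _ f H
  | right _ => exist _ (ozero p.1 q.1) (ozero_valid p q) end.

Definition smash_kcat : kcat k := {|
  Obj := SObj;
  Hom := SHom;
  hzero := fun p q => exist _ (ozero p.1 q.1) (ozero_valid p q);
  hadd := fun p q f g => mkS p q (fun b a => hadd (sval f b a) (sval g b a));
  hscale := fun p q c f => mkS p q (fun b a => hscale c (sval f b a));
  comp := fun p q r g f => mkS p r (ocomp _ _ _ (sval g) (sval f));
  idm := fun p => mkS p p (oid p.1) |}.

Definition smash_orbit : gcat k G := {|
  gbase := smash_kcat;
  aobj := fun m (p : SObj) => (p.1, gmul m p.2);
  amor := fun m (p q : SObj) (f : SHom p q) =>
            mkS (p.1, gmul m p.2) (q.1, gmul m q.2) (sval f) |}.

End Orbit.
Arguments smash_orbit {k G C} hC.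

From Pilot Require Import Defs.
From mathcomp Require Import all_boot all_algebra.
From Stdlib Require Import ClassicalEpsilon FunctionalExtensionality ProofIrrelevance.
Import Defs.
Set Implicit Arguments. Unset Strict Implicit. Unset Printing Implicit Defensive.

(* The key fact is that the hom-space (C/G)#G (x^(a), y^(b)) is the homogeneous
   component of degree b^-1 a, i.e. the image of C((b^-1 a) x, y) under the
   injective map P^(1).  So every morphism of the smash product is written
   uniquely as  Pm h,  and the structure of (C/G)#G is computed on the
   representatives h:
   - sums and scalar multiples are taken componentwise ([P1_add], [P1_scale]);
   - Pm g . Pm f = Pm (g . b(f))  for g of degree b ([compP]);
   - the identity is Pm id ([idmS]) and the G-action leaves h unchanged ([amorP]).
   The functor is  F x = x^(1),  F f = Pm f,  with  rho_{g,x} = Pm id_{g x} :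
   x^(g) -> (g x)^(1).  Functoriality, naturality and the cocycle condition
   reduce to identities in C; F is fully faithful because P^(1) is injective, and
   dense because x^(a) is isomorphic to (a x)^(1) through Pm id ([Pid_iso]). *)

Section GroupLemmas.
Variable G : Grp.
Implicit Types a b : G.

Lemma gmulKg a b : gmul (ginv a) (gmul a b) = b.
Proof. by rewrite gmulA gmulVg gmul1g. Qed.

Lemma gmulKVg a b : gmul a (gmul (ginv a) b) = b.
Proof. by rewrite gmulA gmulgV gmul1g. Qed.

Lemma ginv_uniq a b : gmul a b = gone -> ginv a = b.
Proof. by move=> e; rewrite -[ginv a]gmulg1 -e gmulA gmulVg gmul1g. Qed.

Lemma ginvM a b : ginv (gmul a b) = gmul (ginv b) (ginv a).
Proof.
by apply: ginv_uniq; rewrite gmulA -[gmul (gmul a b) _]gmulA gmulgV gmulg1 gmulgV.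
Qed.

Lemma ginv1 : ginv (gone : G) = gone.
Proof. by apply: ginv_uniq; rewrite gmul1g. Qed.

Lemma ginvK a : ginv (ginv a) = a.
Proof. by apply: ginv_uniq; rewrite gmulVg. Qed.

End GroupLemmas.

(* Since the objects of the smash product and the objects a x, (b a) x, ... are
   only propositionally equal, these rules do the bookkeeping. *)
Section Transport.
Variables (k : comPzRingType) (D : kcat k).

Lemma tr_tr (x x' x'' y y' y'' : Obj D) (e1 : x = x') (e2 : y = y')
  (e3 : x' = x'') (e4 : y' = y'') (f : Hom D x y) :
  tr e3 e4 (tr e1 e2 f) = tr (etrans e1 e3) (etrans e2 e4) f.
Proof. by destruct e3, e4, e1, e2. Qed.

Lemma tr_pi (x x' y y' : Obj D) (e1 e1' : x = x') (e2 e2' : y = y') (f : Hom D x y) :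
  tr e1 e2 f = tr e1' e2' f.
Proof. by rewrite (proof_irrelevance _ e1 e1') (proof_irrelevance _ e2 e2'). Qed.

Lemma tr_refl (x y : Obj D) (e1 : x = x) (e2 : y = y) (f : Hom D x y) : tr e1 e2 f = f.
Proof. by rewrite (tr_pi e1 erefl e2 erefl). Qed.

Lemma tr_inj (x x' y y' : Obj D) (e1 : x = x') (e2 : y = y') (f g : Hom D x y) :
  tr e1 e2 f = tr e1 e2 g -> f = g.
Proof. by destruct e1, e2. Qed.

Lemma tr_comp (x y z x' y' z' : Obj D) (e1 : x = x') (e2 e2' : y = y') (e3 : z = z')
  (g : Hom D y z) (f : Hom D x y) :
  comp (tr e2 e3 g) (tr e1 e2' f) = tr e1 e3 (comp g f).
Proof. by rewrite (proof_irrelevance _ e2' e2); destruct e1, e2, e3. Qed.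

Lemma tr_idm (X X' A B : Obj D) (e1 : X = A) (e2 : X = B) (e1' : X' = A) (e2' : X' = B) :
  tr e1 e2 (idm X) = tr e1' e2' (idm X').
Proof. by destruct e1', e2'; destruct e1; rewrite tr_refl. Qed.

Lemma tr_hzero (x x' y y' : Obj D) (e1 : x = x') (e2 : y = y') :
  tr e1 e2 (hzero : Hom D x y) = hzero.
Proof. by destruct e1, e2. Qed.

Lemma tr_hadd (x x' y y' : Obj D) (e1 : x = x') (e2 : y = y') (f g : Hom D x y) :
  tr e1 e2 (hadd f g) = hadd (tr e1 e2 f) (tr e1 e2 g).
Proof. by destruct e1, e2. Qed.

Lemma tr_hscale (x x' y y' : Obj D) (e1 : x = x') (e2 : y = y') a (f : Hom D x y) :
  tr e1 e2 (hscale a f) = hscale a (tr e1 e2 f).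
Proof. by destruct e1, e2. Qed.

Hypothesis hD : is_kcat D.

Lemma comp_tr_idl (X Y X' Y' W W' : Obj D) (f : Hom D X Y)
  (e3 : X = X') (e4 : Y = Y') (e1 : W = Y') (e2 : W = W') :
  comp (tr e1 e2 (idm W)) (tr e3 e4 f) = tr e3 (etrans e4 (etrans (esym e1) e2)) f.
Proof. by destruct e2, e1, e3, e4; rewrite (kc_comp1l hD). Qed.

Lemma comp_tr_idr (X Z Y' Z' W W' : Obj D) (f : Hom D X Z)
  (e2 : X = Y') (e3 : Z = Z') (e1 : W = W') (e2' : W = Y') :
  comp (tr e2 e3 f) (tr e1 e2' (idm W)) = tr (etrans e2 (etrans (esym e2') e1)) e3 f.
Proof. by destruct e1, e2', e3; destruct e2; rewrite (kc_comp1r hD). Qed.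

Lemma comp0l (x y z : Obj D) (f : Hom D x y) : comp (hzero : Hom D y z) f = hzero.
Proof. by rewrite -(kc_scale0 hD hzero) (kc_compZl hD) (kc_scale0 hD). Qed.

Lemma comp0r (x y z : Obj D) (g : Hom D y z) : comp g (hzero : Hom D x y) = hzero.
Proof. by rewrite -(kc_scale0 hD hzero) (kc_compZr hD) (kc_scale0 hD). Qed.

Lemma hadd0r (x y : Obj D) (f : Hom D x y) : hadd f hzero = f.
Proof. by rewrite (kc_addC hD) (kc_add0 hD). Qed.

Lemma hscale0r (x y : Obj D) a : hscale a (hzero : Hom D x y) = hzero.
Proof. by rewrite -(kc_scale0 hD hzero) (kc_scaleA hD) GRing.mulr0 (kc_scale0 hD). Qed.

Lemma foldr_hadd_single (I : Type) (x y : Obj D) (F : I -> Hom D x y) (c0 : I) :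
  (forall c, c <> c0 -> F c = hzero) -> forall s, List.NoDup s ->
  foldr (fun c acc => hadd (F c) acc) hzero s =
  if excluded_middle_informative (List.In c0 s) then F c0 else hzero.
Proof.
move=> HF; elim=> [|c s IH] /= Hnd.
  by case: excluded_middle_informative => // -[].
inversion Hnd as [|c' s' Hc Hnd']; subst; rewrite (IH Hnd').
destruct (excluded_middle_informative (List.In c0 s)) as [H1|H1];
  destruct (excluded_middle_informative (c = c0 \/ List.In c0 s)) as [H2|H2].
- by rewrite /= HF ?(kc_add0 hD) // => ec; apply: Hc; rewrite ec.
- by case: H2; right.
- by case: H2 => [ec|//]; rewrite /= ec hadd0r.
- by rewrite /= HF ?(kc_add0 hD) // => ec; apply: H2; left.
Qed.

End Transport.
Section SmashProduct.
Variables (k : comPzRingType) (G : Grp) (C : gcat k G) (hC : is_gcat C).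
Local Notation hK := (gc_kcat hC).
Local Notation P1 := (P1 k G C hC).
Local Notation SH := (SHom k G C hC).
Local Notation SO := (SObj k G C).
Local Notation S := (smash_kcat k G C hC).

Lemma amor_tr (g : G) (x x' y y' : Obj C) (e1 : x = x') (e2 : y = y') (f : Hom C x y) :
  amor g (tr e1 e2 f) = tr (f_equal (aobj g) e1) (f_equal (aobj g) e2) (amor g f).
Proof. by destruct e1, e2. Qed.

Lemma amorM (b a : G) (x y : Obj C) (f : Hom C x y) :
  amor (gmul b a) f =
  tr (esym (gc_aobjM hC b a x)) (esym (gc_aobjM hC b a y)) (amor b (amor a f)).
Proof.
by rewrite -(gc_amorM hC f (gc_aobjM hC b a x) (gc_aobjM hC b a y)) tr_tr tr_refl.
Qed.

Lemma amor1 (x y : Obj C) (f : Hom C x y) :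
  amor (gone : G) f = tr (esym (gc_aobj1 hC x)) (esym (gc_aobj1 hC y)) f.
Proof. by rewrite -{2}(gc_amor1 hC f (gc_aobj1 hC x) (gc_aobj1 hC y)) tr_tr tr_refl. Qed.

Lemma amor_congr (a a' : G) (H : a = a') (x y : Obj C) (f : Hom C x y) :
  amor a' f = tr (f_equal (fun t => aobj t x) H) (f_equal (fun t => aobj t y) H) (amor a f).
Proof. by destruct H. Qed.

Lemma fsum_single (a b : Obj C) (F : G -> Hom C a b) (c0 : G) :
  (forall c, c <> c0 -> F c = hzero) -> fsum k G C a b F = F c0.
Proof.
move=> HF; rewrite /fsum; set P := (fun m => _).
have exP : exists m, P m.
  exists (hadd (F c0) hzero); exists [:: c0]; split.
    by apply: List.NoDup_cons; [case | exact: List.NoDup_nil].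
  split=> //= c Hc; left; apply: NNPP => ne; apply: Hc; apply: HF => e; apply: ne.
  by rewrite e.
have [s [Hnd [Hs ->]]] := epsilon_spec (inhabits hzero) P exP.
rewrite (foldr_hadd_single hK HF Hnd).
case: excluded_middle_informative => [//|Hn]; apply: esym; apply: NNPP => ne.
by apply: Hn; apply: Hs.
Qed.

Lemma P1_congr (x y : Obj C) (a a' : G) (H : a = a') (h : Hom C (aobj a x) y) :
  P1 x y a h = P1 x y a' (tr (f_equal (fun t => aobj t x) H) erefl h).
Proof. by destruct H. Qed.

Lemma P1_omor (x y : Obj C) (a : G) (h : Hom C (aobj a x) y) :
  is_omor k G C x y (P1 x y a h).
Proof.
split; [|split].
- move=> c b a' ex ey; rewrite /P1.
  have Eq : gmul (ginv (gmul c b)) (gmul c a') = gmul (ginv b) a'.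
    by rewrite ginvM -gmulA gmulKg.
  case: excluded_middle_informative => [e1|n1];
    case: excluded_middle_informative => [e2|n2].
  + rewrite amorM !tr_tr amor_tr; exact: tr_pi.
  + by case: n2; rewrite -Eq.
  + by case: n1; rewrite Eq.
  + by rewrite tr_hzero amor_zero.
- move=> a'; exists [:: gmul a' (ginv a)] => b; rewrite /P1.
  case: excluded_middle_informative => [e _|//]; left.
  by rewrite -e ginvM ginvK gmulA gmulgV gmul1g.
- move=> b; exists [:: gmul b a] => a'; rewrite /P1.
  case: excluded_middle_informative => [e _|//]; left.
  by rewrite -e gmulKVg.
Qed.

(* h is recovered as the (1, a) entry of P^(1) h. *)
Lemma P1_inj (x y : Obj C) (a : G) (h h' : Hom C (aobj a x) y) :
  P1 x y a h = P1 x y a h' -> h = h'.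
Proof.
move/(f_equal (fun F => F gone a)); rewrite /P1.
case: excluded_middle_informative => [e|ne]; last by case: ne; rewrite ginv1 gmul1g.
by rewrite !amor1 !tr_tr => /tr_inj.
Qed.

Lemma P1_add (x y : Obj C) (a : G) (h h' : Hom C (aobj a x) y) :
  (fun b a' => hadd (P1 x y a h b a') (P1 x y a h' b a')) = P1 x y a (hadd h h').
Proof.
apply: functional_extensionality_dep => m; apply: functional_extensionality_dep => l.
rewrite /P1; case: excluded_middle_informative => e.
  by rewrite (gc_amor_add hC) tr_hadd.
exact: (kc_add0 hK).
Qed.

Lemma P1_scale (x y : Obj C) (a : G) c (h : Hom C (aobj a x) y) :
  (fun b a' => hscale c (P1 x y a h b a')) = P1 x y a (hscale c h).
Proof.
apply: functional_extensionality_dep => m; apply: functional_extensionality_dep => l.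
rewrite /P1; case: excluded_middle_informative => e.
  by rewrite (gc_amor_scale hC) tr_hscale.
exact: (hscale0r hK).
Qed.

Lemma oid_P1 (x : Obj C) (a : G) (H : a = gone) (E : x = aobj a x) :
  oid k G C x = P1 x x a (tr E erefl (idm x)).
Proof.
apply: functional_extensionality_dep => m; apply: functional_extensionality_dep => l.
rewrite /oid /P1.
case: excluded_middle_informative => [e|ne];
  case: excluded_middle_informative => [e'|ne'].
- subst m; rewrite amor_tr (gc_amor_id hC) tr_tr.
  by rewrite (tr_idm _ _ (erefl (aobj l x)) (erefl _)).
- by subst m; case: ne'; rewrite gmulVg H.
- by case: ne; rewrite -(gmulKVg m l) e' H gmulg1.
- by [].
Qed.

(* Composition in C/G of homogeneous morphisms of degrees a and b:
   P g . P f = P (g . b(f)), of degree b a.  Only the term c = m b of the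
   sum (g f)_(m,l) = sum_c g_(m,c) f_(c,l) can be non-zero. *)
Lemma ocomp_P1 (x y z : Obj C) (b a : G)
  (g : Hom C (aobj b y) z) (f : Hom C (aobj a x) y) :
  ocomp k G C x y z (P1 y z b g) (P1 x y a f) =
  P1 x z (gmul b a) (tr (esym (gc_aobjM hC b a x)) erefl (comp g (amor b f))).
Proof.
apply: functional_extensionality_dep => m; apply: functional_extensionality_dep => l.
rewrite /ocomp (@fsum_single _ _ _ (gmul m b)); last first.
  move=> c ne; rewrite /P1; case: excluded_middle_informative => [e|_].
    by case: ne; rewrite -e gmulKVg.
  exact: (comp0l hK).
rewrite /P1.
case: excluded_middle_informative => [e1|n1]; last by case: n1; rewrite gmulKg.
case: excluded_middle_informative => [e2|n2];
  case: excluded_middle_informative => [e3|n3].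
- rewrite amorM tr_tr tr_comp amor_tr (gc_amor_comp hC) tr_tr; exact: tr_pi.
- case: n3.
  by rewrite -(gmulKVg b (gmul (ginv m) l)) [gmul (ginv b) _]gmulA -ginvM e2.
- by case: n2; rewrite ginvM -gmulA e3 gmulKg.
- exact: (comp0r hK).
Qed.

Definition sdeg (p q : SO) : G := gmul (ginv q.2) p.2.

Lemma sdeg_comp (p q r : SO) : gmul (sdeg q r) (sdeg p q) = sdeg p r.
Proof. by rewrite /sdeg -gmulA gmulKVg. Qed.

Lemma sdeg_act (m : G) (p q : SO) : sdeg p q = sdeg (p.1, gmul m p.2) (q.1, gmul m q.2).
Proof. by rewrite /sdeg /= ginvM -gmulA gmulKg. Qed.

Lemma sdeg_refl (p : SO) : sdeg p p = gone.
Proof. exact: gmulVg. Qed.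

Lemma P1_valid (p q : SO) (h : Hom C (aobj (sdeg p q) p.1) q.1) :
  svalid k G C hC p q (P1 p.1 q.1 (sdeg p q) h).
Proof. by split; [exact: P1_omor | exists h]. Qed.

Definition Pm (p q : SO) (h : Hom C (aobj (sdeg p q) p.1) q.1) : SH p q :=
  exist _ (P1 p.1 q.1 (sdeg p q) h) (P1_valid h).

Lemma SHom_ext (p q : SO) (f g : SH p q) : sval f = sval g -> f = g.
Proof.
by case: f => f Hf; case: g => g Hg /= e; subst g; f_equal; exact: proof_irrelevance.
Qed.

Lemma mkS_P1 (p q : SO) (h : Hom C (aobj (sdeg p q) p.1) q.1) :
  mkS k G C hC p q (P1 p.1 q.1 (sdeg p q) h) = Pm h.
Proof.
rewrite /mkS; case: excluded_middle_informative => H; first exact: SHom_ext.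
by case: H; apply: P1_valid.
Qed.

Lemma compP (p q r : SO) (g : Hom C (aobj (sdeg q r) q.1) r.1)
  (f : Hom C (aobj (sdeg p q) p.1) q.1) :
  comp (c:=S) (Pm g) (Pm f) =
  Pm (tr (etrans (esym (gc_aobjM hC (sdeg q r) (sdeg p q) p.1))
            (f_equal (fun t => aobj t p.1) (sdeg_comp p q r))) erefl
       (comp g (amor (sdeg q r) f))).
Proof.
rewrite [LHS](_ : _ = mkS k G C hC p r (ocomp k G C p.1 q.1 r.1
  (P1 q.1 r.1 (sdeg q r) g) (P1 p.1 q.1 (sdeg p q) f))) //.
rewrite ocomp_P1 (P1_congr (sdeg_comp p q r)) tr_tr mkS_P1; congr Pm; exact: tr_pi.
Qed.

Definition sdeg_refl_obj (p : SO) : p.1 = aobj (sdeg p p) p.1 :=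
  esym (etrans (f_equal (fun t => aobj t p.1) (sdeg_refl p)) (gc_aobj1 hC p.1)).

Lemma idmS (p : SO) : idm (c:=S) p = Pm (tr (sdeg_refl_obj p) erefl (idm p.1)).
Proof.
rewrite [LHS](_ : _ = mkS k G C hC p p (oid k G C p.1)) //.
rewrite (oid_P1 (sdeg_refl p) (sdeg_refl_obj p)); exact: mkS_P1.
Qed.

Lemma amorP (m : G) (p q : SO) (h : Hom C (aobj (sdeg p q) p.1) q.1) :
  amor (c:=smash_orbit hC) m (Pm h) =
  Pm (p:=(p.1, gmul m p.2)) (q:=(q.1, gmul m q.2))
     (tr (f_equal (fun t => aobj t p.1) (sdeg_act m p q)) erefl h).
Proof.
rewrite [LHS](_ : _ =
  mkS k G C hC (p.1, gmul m p.2) (q.1, gmul m q.2) (P1 p.1 q.1 (sdeg p q) h)) //.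
rewrite (P1_congr (sdeg_act m p q)); exact: mkS_P1.
Qed.

Lemma trS (p q p' q' : SO) (e1 : p = p') (e2 : q = q')
  (h : Hom C (aobj (sdeg p q) p.1) q.1) :
  @tr _ S _ _ _ _ e1 e2 (Pm h) =
  Pm (tr (f_equal2 (fun p q => aobj (sdeg p q) p.1) e1 e2) (f_equal fst e2) h).
Proof. by case: p' / e1; case: q' / e2; rewrite [tr _ _ h]tr_refl. Qed.

Lemma Pid_iso (p q : SO) (W : Obj C) (e1 : W = aobj (sdeg p q) p.1) (e2 : W = q.1) :
  @is_iso _ S _ _ (Pm (tr e1 e2 (idm W))).
Proof.
have e1' : p.1 = aobj (sdeg q p) q.1.
  rewrite -e2 e1 -(gc_aobjM hC) sdeg_comp sdeg_refl; exact: esym (gc_aobj1 hC _).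
exists (Pm (tr e1' erefl (idm p.1))).
by split; rewrite compP idmS; congr Pm;
  rewrite amor_tr (gc_amor_id hC) (comp_tr_idl hK) tr_tr; exact: tr_idm.
Qed.

Definition Fmor (x y : Obj C) (f : Hom C x y) : SH (x, gone) (y, gone) :=
  Pm (p:=(x, gone)) (q:=(y, gone)) (tr (sdeg_refl_obj (x, gone)) erefl f).

Lemma sdeg_rho (g : G) (x : Obj C) : sdeg (x, gmul g gone) (aobj g x, gone) = g.
Proof. by rewrite /sdeg /= ginv1 gmul1g gmulg1. Qed.

Definition Frho (g : G) (x : Obj C) : SH (x, gmul g gone) (aobj g x, gone) :=
  Pm (tr (f_equal (fun t => aobj t x) (esym (sdeg_rho g x))) erefl (idm (aobj g x))).

Definition Ffun : wefun C (smash_orbit hC) :=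
  @Build_wefun k G C (smash_orbit hC)
    (@Build_kfun k C (smash_orbit hC) (fun x : Obj C => ((x, gone) : SO)) Fmor) Frho.

Lemma Ffun_kfun : is_kfun Ffun.
Proof.
split; [|split; [|split]].
- move=> x y z g f; change (Fmor (comp g f) = comp (c:=S) (Fmor g) (Fmor f)).
  rewrite /Fmor compP; congr Pm.
  rewrite amor_tr (amor_congr (esym (gmulVg (gone : G))) f) amor1 !tr_tr tr_comp tr_tr.
  exact: tr_pi.
- by move=> x; change (Fmor (idm x) = idm (c:=S) (x, gone)); rewrite /Fmor idmS.
- move=> x y f g; change (Fmor (hadd f g) = mkS k G C hC (x, gone) (y, gone)
    (fun b a => hadd (sval (Fmor f) b a) (sval (Fmor g) b a))).
  by rewrite P1_add mkS_P1 /Fmor tr_hadd.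
- move=> x y c f; change (Fmor (hscale c f) = mkS k G C hC (x, gone) (y, gone)
    (fun b a => hscale c (sval (Fmor f) b a))).
  by rewrite P1_scale mkS_P1 /Fmor tr_hscale.
Qed.

Lemma Frho_natural (g : G) (x y : Obj C) (f : Hom C x y) :
  comp (c:=S) (Frho g y) (amor (c:=smash_orbit hC) g (Fmor f)) =
  comp (c:=S) (Fmor (amor g f)) (Frho g x).
Proof.
rewrite /Fmor /Frho amorP !compP; congr Pm.
rewrite !tr_tr !amor_tr (amor_congr (esym (sdeg_rho g y)) f) !tr_tr (comp_tr_idl hK).
rewrite (gc_amor_id hC) (comp_tr_idr hK) !tr_tr; exact: tr_pi.
Qed.

Lemma Frho_cocycle (b a : G) (x : Obj C)
  (e1 : aobj (c:=smash_orbit hC) (gmul b a) ((x, gone) : SO) =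
        aobj (c:=smash_orbit hC) b (aobj (c:=smash_orbit hC) a ((x, gone) : SO)))
  (e2 : ((aobj (gmul b a) x, gone) : SO) = (aobj b (aobj a x), gone)) :
  comp (c:=S) (Frho b (aobj a x)) (amor (c:=smash_orbit hC) b (Frho a x)) =
  @tr _ S _ _ _ _ e1 e2 (Frho (gmul b a) x).
Proof.
rewrite /Frho amorP compP trS; congr Pm.
rewrite !tr_tr !amor_tr (gc_amor_id hC) (comp_tr_idl hK) !tr_tr; exact: tr_idm.
Qed.

Lemma Ffun_wefun : is_wefun Ffun.
Proof.
split; first exact: Ffun_kfun.
split; first exact: Frho_natural.
split; first by move=> g x; exact: Pid_iso.
exact: Frho_cocycle.
Qed.

Definition rep (x y : Obj C) (f : SH (x, gone) (y, gone)) :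
  Hom C (aobj (sdeg (x, gone) (y, gone)) x) y :=
  proj1_sig (constructive_indefinite_description _ (proj2 (proj2_sig f))).

Lemma repP (x y : Obj C) (f : SH (x, gone) (y, gone)) :
  sval f = P1 x y (sdeg (x, gone) (y, gone)) (rep f).
Proof. exact: proj2_sig (constructive_indefinite_description _ (proj2 (proj2_sig f))). Qed.

Lemma smash_obj_iso (x : Obj C) (a : G) :
  exists f : SH (aobj a x, gone) (x, a), @is_iso _ S _ _ f.
Proof.
have E : x = aobj (sdeg ((aobj a x, gone) : SO) (x, a)) (aobj a x).
  by rewrite /sdeg /= gmulg1 -(gc_aobjM hC) gmulVg gc_aobj1.
by exists (Pm (p:=(aobj a x, gone)) (q:=(x, a)) (tr E erefl (idm x))); exact: Pid_iso.
Qed.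

Lemma Ffun_equivalence : is_equivalence Ffun.
Proof.
split.
- move=> x y.
  exists (fun f : SH (x, gone) (y, gone) =>
            tr (esym (sdeg_refl_obj (x, gone))) erefl (rep f)).
  + move=> f; have := repP (Fmor f).
    by rewrite [sval _]/= => /P1_inj <-; rewrite tr_tr tr_refl.
  + by move=> f; apply: SHom_ext; rewrite [LHS]/= tr_tr tr_refl -repP.
- move=> [x a]; have [f iso_f] := smash_obj_iso x a.
  by exists (aobj a x); exists f.
Qed.

End SmashProduct.

Theorem mainTheorem13 (k : comPzRingType) (G : Grp) (C : gcat k G) (hC : is_gcat C) :
  exists F : wefun C (smash_orbit hC), is_wefun F /\ is_equivalence F.
Proof. by exists (Ffun hC); split; [exact: Ffun_wefun | exact: Ffun_equivalence]. Qed.
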